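(* Let $w_1=a$, $w_2=b$, $w_3=ba$, $w_4=baabbaa$, and $w_n = b\cdot\mathit{TM}_{2n-8}\cdot\overline{\mathit{TM}_{2n-6}}\cdot\overline{\mathit{TM}_{2n-6}}'$ for $n\ge 5$. Then: (1) the infinite concatenation $w_1w_2w_3\cdots$ equals the infinite Thue–Morse word $\mathcal{TM}$, i.e. $\mathcal{TM}=\lim_{n\to\infty} w_1\cdots w_n$; (2) $w_n\preceq w_{n+1}$ for every $n\ge1$; (3) $w_n$ is a Nyldon word for every $n\ge 1$. In particular, $\mathcal{TM}$ admits a factorization into an infinite lexicographically non-decreasing sequence of Nyldon words.
   Context: Strings are over the binary alphabet $\{a,b\}$ ordered by $a \prec b$, and $\prec$ also denotes the induced lexicographic order on strings: $x \prec y$ iff $x$ is a proper prefix of $y$, or there is $i$ with $x[1..i-1]=y[1..i-1]$ and $x[i]\prec y[i]$; $x\preceq y$ means $x\prec y$ or $x=y$. Nyldon words are defined recursively: every string of length $1$ is a Nyldon word; a string $w$ with $|w|\ge 2$ is a Nyldon word iff there is no factorization $w=\gamma_1\cdots\gamma_m$ with $m\ge 2$, each $\gamma_i$ a nonempty Nyldon word, and $\gamma_1\preceq\gamma_2\preceq\cdots\preceq\gamma_m$. For a binary string $w$, $\overline{w}$ is obtained by exchanging $a$ and $b$ letterwise, and $w'$ is $w$ with its last letter removed; $\overline{w}'$ means $(\overline{w})'$. Thue–Morse words: $\mathit{TM}_0=a$ and $\mathit{TM}_k=\mathit{TM}_{k-1}\cdot\overline{\mathit{TM}_{k-1}}$ for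 $k\ge1$; the infinite Thue–Morse word is $\mathcal{TM}=\lim_{k\to\infty}\mathit{TM}_k$ (each $\mathit{TM}_k$ is a prefix of $\mathit{TM}_{k+1}$). *)

From mathcomp Require Import all_boot.
Set Implicit Arguments. Unset Strict Implicit. Unset Printing Implicit Defensive.

Notation word := (seq bool).
Notation la := false.
Notation lb := true.

Fixpoint lexlt (x y : word) : bool :=
  match x, y with
  | [::], _ :: _ => true
  | _, [::] => false
  | c :: x', d :: y' => (~~ c && d) || ((c == d) && lexlt x' y')
  end.

Definition lexle (x y : word) : bool := lexlt x y || (x == y).

(* Nyldon words, recursive definition, with fuel bounding the length. *)
Fixpoint nyldon_fuel (n : nat) (w : word) : Prop :=
  match n with
  | 0 => False
  | n'.+1 =>
      size w = 1 \/
      (2 <= size w /\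
       ~ (exists gs : seq word,
            [/\ 2 <= size gs, flatten gs = w,
                (forall g, g \in gs -> nyldon_fuel n' g) &
                sorted lexle gs]))
  end.

Definition Nyldon (w : word) : Prop := nyldon_fuel (size w) w.

Definition compl (w : word) : word := map negb w.
Definition dropl (w : word) : word := take (size w).-1 w.

Fixpoint TM (k : nat) : word :=
  match k with
  | 0 => [:: la]
  | k'.+1 => TM k' ++ compl (TM k')
  end.

(* Infinite Thue-Morse word: letter i is letter i of TM_(i+1) (size 2^(i+1) > i);
   since each TM_k is a prefix of TM_(k+1), this is the limit. *)
Definition TMinf (i : nat) : bool := nth la (TM i.+1) i.

(* The words w_n (w_0 is an unused dummy) *)
Definition wn (n : nat) : word :=
  match n with
  | 0 => [::]
  | 1 => [:: la]
  | 2 => [:: lb]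
  | 3 => [:: lb; la]
  | 4 => [:: lb; la; la; lb; lb; la; la]
  | _ => lb :: TM (2 * n - 8) ++ compl (TM (2 * n - 6)) ++ dropl (compl (TM (2 * n - 6)))
  end.

Definition Wprefix (n : nat) : word := flatten [seq wn k | k <- iota 1 n].

(* For n >= 5, w_n is b followed by u_(n-4) without its last letter, where
   u_k = TM_(2k) ~TM_(2k+2) ~TM_(2k+2) = mu2^k (abaabbaab) and mu2 is the square of the
   Thue-Morse morphism.  Parts (1) and (2) are then computations with
   TM_(k+2) = TM_k ~TM_k ~TM_k TM_k.
   For (3), take a non-decreasing Nyldon factorization h1 h2 h3 ... of w = w_n and let
   c = |h1|.  If h2 starts with bb or baba it is not Nyldon; if h2 starts with b and h3
   with a, then h3 < h2.  Otherwise the factor of w at c drops below the prefix of w of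
   length c, so h2 < h1: either w_c = a, or h2 is a proper prefix of h1, or there is d < c
   with w[c, c+d) = w[0, d), w_(c+d) = a and w_d = b.  Such a d exists at every
   occurrence of ba in u_k: this is checked by computation for k = 1 and is preserved by
   mu2, which turns a witness d at position c into the witness 4d at 4c. *)

From mathcomp Require Import all_boot zify.
From Stdlib Require Import Classical.
Set Implicit Arguments. Unset Strict Implicit. Unset Printing Implicit Defensive.

(** * Lexicographic order and factors *)

Lemma lexle_cons c x y : lexle (c :: x) (c :: y) = lexle x y.
Proof. by rewrite /lexle /= eqseq_cons eqxx; case: c. Qed.

Lemma lexle_cat2l p x y : lexle (p ++ x) (p ++ y) = lexle x y.
Proof. by elim: p => //= c p IH; rewrite lexle_cons. Qed.

Lemma lexle_prefix x y : lexle x (x ++ y).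
Proof. by rewrite -[x in lexle x]cats0 lexle_cat2l /lexle; case: y. Qed.

Lemma nth_prefix (s t : word) i : prefix s t -> i < size s -> nth la s i = nth la t i.
Proof. by case/prefixP=> s' ->; rewrite nth_cat => ->. Qed.

Lemma not_lexle_mismatch d (x y : word) : d < size x ->
  (forall i, i < d -> i < size y -> nth la y i = nth la x i) ->
  (d < size y -> nth la y d = la /\ nth la x d = lb) ->
  ~~ lexle x y.
Proof.
elim: d x y => [|d IH] [|c x] [|e y] //=.
- by move=> _ _ /(_ isT) [-> ->].
- move=> ltdx eq_xy mis; have -> : e = c by apply: (eq_xy 0).
  rewrite lexle_cons; apply: IH => // i ltid ltiy; exact: (eq_xy i.+1).
Qed.

Definition factor (w : word) c l := take l (drop c w).

Lemma nth_factor w c l i : i < l -> nth la (factor w c l) i = nth la w (c + i).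
Proof. by move=> ltil; rewrite nth_take // nth_drop. Qed.

Lemma size_factor w c l : c + l <= size w -> size (factor w c l) = l.
Proof. by move=> le_clw; rewrite size_take size_drop; case: ltnP => //; lia. Qed.

Lemma factorS w c l : c < size w -> factor w c l.+1 = nth la w c :: factor w c.+1 l.
Proof. by move=> lt_c; rewrite /factor (drop_nth la). Qed.

Lemma not_lexle_prefix_factor (w : word) c l d : d < c -> c + l <= size w ->
  (forall i, i < d -> i < l -> nth la w (c + i) = nth la w i) ->
  (d < l -> nth la w (c + d) = la /\ nth la w d = lb) ->
  ~~ lexle (take c w) (factor w c l).
Proof.
move=> ltdc le_clw eq_w mis.
apply: (not_lexle_mismatch (d := d)); rewrite ?size_factor ?size_takel //; try lia.
- by move=> i ltid ltil; rewrite nth_factor // nth_take ?eq_w //; lia.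
- by move=> ltdl; rewrite nth_factor // nth_take //; apply: mis.
Qed.

Definition dominated_at (v : word) p e :=
  [/\ forall i, i < e -> nth la v (p + i) = nth la v i,
      nth la v (p + e) = la & nth la v e = lb].

Lemma not_lexle_dominated (w : word) c l d : d < c -> c + l <= size w ->
  dominated_at w c d -> ~~ lexle (take c w) (factor w c l).
Proof.
move=> lt_dc le_clw [eq_w wa wb].
by apply: (not_lexle_prefix_factor (d := d)) => // i lt_i _; apply: eq_w.
Qed.

(** * Nyldon words *)

Definition factorization_by (P : word -> Prop) (w : word) (gs : seq word) :=
  [/\ 2 <= size gs, flatten gs = w, forall g, g \in gs -> P g & sorted lexle gs].

Notation nyldon_factorization := (factorization_by Nyldon).

Lemma size_flatten_lt (T : eqType) (gs : seq (seq T)) (g : seq T) :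
  (forall h, h \in gs -> 0 < size h) -> 2 <= size gs -> g \in gs ->
  size g < size (flatten gs).
Proof.
move=> gt0 gs2 g_in; case/splitPr: g_in gt0 gs2 => gs1 gs2'.
rewrite flatten_cat /= !size_cat; case: gs1 => [|h gs1] /= gt0.
- case: gs2' gt0 => [|h' gs2'] gt0 //= _.
  by have := gt0 h'; rewrite !inE eqxx orbT size_cat => /(_ isT); lia.
- by have := gt0 h; rewrite !inE eqxx size_cat => /(_ isT); lia.
Qed.

Lemma factorization_byW (P Q : word -> Prop) w gs :
  (forall h, P h -> 0 < size h) -> (forall h, size h < size w -> P h -> Q h) ->
  factorization_by P w gs -> factorization_by Q w gs.
Proof.
move=> P_gt0 PQ [gs2 Egs Pgs sorted_gs]; split=> // g g_in; apply: PQ (Pgs g g_in).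
by rewrite -Egs; apply: size_flatten_lt => // h /Pgs /P_gt0.
Qed.

Lemma ex_factorization_by_iff (P Q : word -> Prop) w :
  (forall h, P h -> 0 < size h) -> (forall h, Q h -> 0 < size h) ->
  (forall h, size h < size w -> P h <-> Q h) ->
  (exists gs, factorization_by P w gs) <-> (exists gs, factorization_by Q w gs).
Proof.
move=> P_gt0 Q_gt0 PQ; split=> -[gs fact_gs]; exists gs.
- by apply: factorization_byW fact_gs => // h /PQ ->.
- by apply: factorization_byW fact_gs => // h /PQ <-.
Qed.

Lemma nyldon_fuel_gt0 n g : nyldon_fuel n g -> 0 < size g.
Proof. by case: n => //= n; case: g => //= [[//|[]]]. Qed.

Lemma nyldon_fuel_size_le n m g : size g <= n -> size g <= m ->
  nyldon_fuel n g <-> nyldon_fuel m g.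
Proof.
elim: n m g => [|n IH] [|m] [|c g] //=; try by move=> *; split=> // -[] // [].
move=> le_gn le_gm.
have fuelE : (exists gs, factorization_by (nyldon_fuel n) (c :: g) gs) <->
             (exists gs, factorization_by (nyldon_fuel m) (c :: g) gs).
  apply: ex_factorization_by_iff; try exact: nyldon_fuel_gt0.
  by move=> h /= lt_h; apply: IH; lia.
by rewrite /factorization_by in fuelE; tauto.
Qed.

Lemma Nyldon_gt0 g : Nyldon g -> 0 < size g.
Proof. exact: nyldon_fuel_gt0. Qed.

Lemma Nyldon1 g : size g = 1 -> Nyldon g.
Proof. by move=> g1; rewrite /Nyldon g1; left. Qed.

Lemma NyldonP w : 2 <= size w ->
  Nyldon w <-> ~ exists gs, nyldon_factorization w gs.
Proof.
case: w => // c g w2.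
have fuelE : (exists gs, factorization_by (nyldon_fuel (size g)) (c :: g) gs) <->
             (exists gs, nyldon_factorization (c :: g) gs).
  apply: ex_factorization_by_iff; [exact: nyldon_fuel_gt0|exact: Nyldon_gt0|].
  by move=> h /= lt_h; apply: nyldon_fuel_size_le; lia.
have ne1 : size (c :: g) <> 1 by move=> g1; rewrite g1 in w2.
by move: fuelE ne1; rewrite /Nyldon /= /factorization_by; tauto.
Qed.

Lemma not_Nyldon_cat u v : Nyldon u -> 0 < size v ->
  (Nyldon v -> lexle u v) ->
  (forall h gs, nyldon_factorization v (h :: gs) -> lexle u h) ->
  ~ Nyldon (u ++ v).
Proof.
move=> Nu v_gt0 le_uv le_u_fact.
have uv2 : 2 <= size (u ++ v) by rewrite size_cat; have := Nyldon_gt0 Nu; lia.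
apply/(NyldonP uv2) => -[]; case: (classic (Nyldon v)) => [Nv|nNv].
- exists [:: u; v]; split=> /=; rewrite ?cats0 ?le_uv //.
  by move=> g; rewrite !inE => /orP [] /eqP ->.
- have v2 : 2 <= size v.
    by case: v v_gt0 nNv {le_uv le_u_fact uv2} => [|c [|d v]] // _ /(_ (Nyldon1 _)).
  have /NNPP [[|h gs] fact_v] : ~ ~ exists gs, nyldon_factorization v gs.
    by move=> nfact; apply/nNv/(NyldonP v2).
  + by case: fact_v.
  + have [_ Ev Ngs sorted_gs] := fact_v.
    exists [:: u, h & gs]; split=> //=; first by rewrite -Ev.
    * by move=> g; rewrite inE => /orP [/eqP ->|/Ngs].
    * by rewrite (le_u_fact h gs).
Qed.

Lemma nyldon_factorization_head v h gs : nyldon_factorization v (h :: gs) ->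
  exists2 h', h = nth la v 0 :: h' & h' ++ flatten gs = behead v.
Proof.
case=> _ <- /(_ h (mem_head _ _)) /Nyldon_gt0.
by case: h => // c h' _; exists h'.
Qed.

Lemma Nyldon_ba : Nyldon [:: lb; la].
Proof.
apply/NyldonP => // -[[|h1 [|h2 gs]] [//= _ Egs Ngs /andP [le12 _]]].
have /Nyldon_gt0 := Ngs h1 (mem_head _ _).
have /Nyldon_gt0 : Nyldon h2 by apply: Ngs; rewrite !inE eqxx orbT.
move: Egs le12 {Ngs}; case: h1 => [|c [|d h1]] //=; case: h2 => [|e h2] //=.
- by case=> -> -> _.
- by case=> _ _; case: h1.
Qed.

Lemma not_Nyldon_bb t : ~ Nyldon [:: lb, lb & t].
Proof.
apply: (@not_Nyldon_cat [:: lb] (lb :: t)) => //; first exact: Nyldon1.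
- by move=> _; exact: (lexle_prefix [:: lb] t).
- by move=> h gs /nyldon_factorization_head [h' -> _]; exact: (lexle_prefix [:: lb] h').
Qed.

Lemma not_Nyldon_baba t : ~ Nyldon [:: lb, la, lb, la & t].
Proof.
apply: (@not_Nyldon_cat [:: lb; la] [:: lb, la & t]) => //; first exact: Nyldon_ba.
- by move=> _; exact: (lexle_prefix [:: lb; la] t).
- move=> h gs fact_v; have [[|d h'] Eh /= Eh'] := nyldon_factorization_head fact_v; subst h.
  + case: fact_v Eh' => _ _ Ngs sorted_gs; case: gs Ngs sorted_gs => [|h2 gs] //= Ngs.
    have /Nyldon_gt0 : Nyldon h2 by apply: Ngs; rewrite !inE eqxx orbT.
    by case: h2 {Ngs} => // c h2 _ /andP [le _] /= [Ec _]; rewrite Ec in le.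
  + by case: Eh' => -> _; exact: (lexle_prefix [:: lb; la] h').
Qed.

(* Applied to [c = |h1|], [l = |h2|] for a factorization [h1 h2 h3 ...]: the second
   alternative says that [h2] starts with [b] and [h3] with [a], so [h3 < h2]. *)
Lemma Nyldon_of_factors w : 2 <= size w ->
  (forall c l, 0 < c -> 0 < l -> c + l <= size w ->
     lexle (take c w) (factor w c l) ->
     ~ Nyldon (factor w c l) \/
     [/\ c + l < size w, nth la w c = lb & nth la w (c + l) = la]) ->
  Nyldon w.
Proof.
move=> w2 Hw; apply/NyldonP => // -[[|h1 [|h2 gs]] [//= _ Ew Ngs /andP [le12 sorted_gs]]].
have /Nyldon_gt0 h1_gt0 := Ngs h1 (mem_head _ _).
have N2 : Nyldon h2 by apply: Ngs; rewrite !inE eqxx orbT.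
have h2_gt0 := Nyldon_gt0 N2.
have take1 : take (size h1) w = h1 by rewrite -Ew take_size_cat.
have factor2 : factor w (size h1) (size h2) = h2.
  by rewrite /factor -Ew drop_size_cat // take_size_cat.
have le_w : size h1 + size h2 <= size w by rewrite -Ew /= !size_cat; lia.
have := Hw _ _ h1_gt0 h2_gt0 le_w; rewrite take1 factor2 => /(_ le12) [//|[lt_w wb wa]].
case: gs Ew Ngs sorted_gs lt_w wa wb => [|h3 gs] <- Ngs sorted_gs.
  by rewrite /= cats0 size_cat ltnn.
have /Nyldon_gt0 h3_gt0 : Nyldon h3 by apply: Ngs; rewrite !inE eqxx !orbT.
rewrite /= => _; rewrite catA nth_cat size_cat ltnn subnn nth_cat h3_gt0 => wa.
rewrite -catA nth_cat ltnn subnn nth_cat h2_gt0 => wb.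
move: sorted_gs => /andP [+ _]; clear -h2_gt0 h3_gt0 wa wb.
by case: h2 h2_gt0 wb => // ? ? _ /= ->; case: h3 h3_gt0 wa => // ? ? _ /= ->.
Qed.

Lemma Nyldon_of_factors_bb w : 2 <= size w ->
  all (fun c => all (fun l => lexle (take c w) (factor w c l) ==>
      prefix [:: lb; lb] (factor w c l) ||
      [&& c + l < size w, nth la w c == lb & nth la w (c + l) == la])
    (iota 1 (size w - c))) (iota 1 (size w)) -> Nyldon w.
Proof.
move=> w2 /allP split_w; apply: Nyldon_of_factors => // c l c_gt0 l_gt0 le_clw le_cl.
have c_in : c \in iota 1 (size w) by rewrite mem_iota; lia.
have l_in : l \in iota 1 (size w - c) by rewrite mem_iota; lia.
move: (allP (split_w c c_in) l l_in); rewrite le_cl /=.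
case/orP=> [/prefixP [t ->]|/and3P [? /eqP ? /eqP ?]].
- by left; exact: not_Nyldon_bb.
- by right.
Qed.

(** * Thue-Morse words *)

Lemma size_compl x : size (compl x) = size x.
Proof. exact: size_map. Qed.

Lemma compl_cat x y : compl (x ++ y) = compl x ++ compl y.
Proof. exact: map_cat. Qed.

Lemma compl_rcons x c : compl (rcons x c) = rcons (compl x) (~~ c).
Proof. exact: map_rcons. Qed.

Lemma complK : involutive compl.
Proof. by move=> x; rewrite /compl -map_comp map_id_in // => c _ /=; rewrite negbK. Qed.

Lemma size_TM k : size (TM k) = 2 ^ k.
Proof. by elim: k => //= k IH; rewrite size_cat size_compl IH expnS mul2n addnn. Qed.

Lemma TM_S k : TM k.+1 = TM k ++ compl (TM k).
Proof. by []. Qed.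

Lemma TM_SS k : TM k.+2 = TM k ++ compl (TM k) ++ compl (TM k) ++ TM k.
Proof. by rewrite /= compl_cat complK !catA. Qed.

Lemma TM_head k : TM k = la :: behead (TM k).
Proof. by elim: k => //= k ->. Qed.

Lemma last_TM k : last la (TM k) = odd k.
Proof.
elim: k => //= k; rewrite (TM_head k) /= last_cat /= => <-.
by rewrite /compl -[lb]/(~~ la) (last_map negb).
Qed.

Lemma prefix_TM k k' : k <= k' -> prefix (TM k) (TM k').
Proof.
move=> /subnKC <-; elim: (k' - k) => [|j IH]; first by rewrite addn0 prefix_refl.
by rewrite addnS /=; apply: prefix_trans IH (prefix_prefix _ _).
Qed.

Lemma nth_TM k i : i < size (TM k) -> nth la (TM k) i = TMinf i.
Proof.
move=> lt_i; rewrite /TMinf (nth_prefix (prefix_TM (leq_maxl k i.+1))) //.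
rewrite -(nth_prefix (prefix_TM (leq_maxr k i.+1))) // size_TM.
exact/ltnW/ltn_expl.
Qed.

Lemma dropl_rcons t c : dropl (rcons t c) = t.
Proof. by rewrite /dropl size_rcons -cats1 take_size_cat. Qed.

Lemma dropl_cat x y : 0 < size y -> dropl (x ++ y) = x ++ dropl y.
Proof. by move=> y_gt0; rewrite /dropl size_cat take_cat ifN; [congr (_ ++ take _ _)|]; lia. Qed.

Lemma dropl_compl_TM_even j r :
  dropl (compl (TM (2 * j).+2)) ++ lb :: r = compl (TM (2 * j).+2) ++ r.
Proof.
have : last la (TM (2 * j).+2) = la by rewrite last_TM /= negbK mul2n odd_double.
have : TM (2 * j).+2 != [::] by rewrite TM_head.
case/lastP: (TM _) => [//|t c _]; rewrite last_rcons => ->.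
by rewrite compl_rcons dropl_rcons cat_rcons.
Qed.

Lemma wnE m :
  wn m.+4.+1 = lb :: TM (2 * m).+2 ++ compl (TM (2 * m).+4) ++ dropl (compl (TM (2 * m).+4)).
Proof.
rewrite [wn _]/=; have -> : 2 * m.+4.+1 - 8 = (2 * m).+2 by lia.
by have -> : 2 * m.+4.+1 - 6 = (2 * m).+4 by lia.
Qed.

Lemma WprefixS n : Wprefix n.+1 = Wprefix n ++ wn n.+1.
Proof.
rewrite /Wprefix -[n.+1]addn1 iotaD map_cat flatten_cat add1n addn1.
by congr (_ ++ _); exact: cats0.
Qed.

Lemma WprefixE m : Wprefix m.+4 = TM (2 * m).+3 ++ dropl (compl (TM (2 * m).+2)).
Proof.
elim: m => [|m IH]; first by [].
rewrite WprefixS IH wnE -catA dropl_compl_TM_even (_ : 2 * m.+1 = (2 * m).+2); last lia.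
rewrite (TM_S (2 * m).+4) (TM_S (2 * m).+3) (TM_S (2 * m).+2).
by move: (TM (2 * m).+2) => T; rewrite !compl_cat complK !catA.
Qed.

Lemma prefix_Wprefix_TM n : exists k, prefix (Wprefix n) (TM k).
Proof.
case: n => [|[|[|[|m]]]]; [by exists 0|by exists 0|by exists 1|by exists 2|].
exists (2 * m).+4; apply/prefixP; exists (lb :: TM (2 * m).+2).
rewrite WprefixE -catA dropl_compl_TM_even (TM_S (2 * m).+3) (TM_S (2 * m).+2).
by move: (TM (2 * m).+2) => T; rewrite compl_cat complK catA.
Qed.

Lemma nth_Wprefix n i : i < size (Wprefix n) -> nth la (Wprefix n) i = TMinf i.
Proof.
have [k pre] := prefix_Wprefix_TM n; move=> lt_i.
by rewrite (nth_prefix pre) // nth_TM //; apply: leq_trans lt_i (size_prefix pre).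
Qed.

Lemma size_Wprefix_unbounded i : exists n, i < size (Wprefix n).
Proof.
exists i.+4; rewrite WprefixE size_cat size_TM; apply: leq_trans (leq_addr _ _).
by apply: leq_trans (ltn_expl i (ltnSn 1)) _; rewrite leq_exp2l //; lia.
Qed.

Lemma wn_le_succ n : 1 <= n -> lexle (wn n) (wn n.+1).
Proof.
case: n => [|[|[|[|[|m]]]]] // _; try by vm_compute.
rewrite !wnE (_ : 2 * m.+1 = (2 * m).+2); last lia.
move: (TM (2 * m).+4.+2) => U; rewrite (TM_SS (2 * m).+2) (TM_head (2 * m).+2).
by move: (behead _) => t; rewrite !compl_cat complK -!catA lexle_cons !lexle_cat2l.
Qed.

(** * The square of the Thue-Morse morphism *)

Definition mu2_letter (c : bool) : word := [:: c; ~~ c; ~~ c; c].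
Definition mu2 (x : word) : word := flatten (map mu2_letter x).

Lemma mu2_cat x y : mu2 (x ++ y) = mu2 x ++ mu2 y.
Proof. by rewrite /mu2 map_cat flatten_cat. Qed.

Lemma mu2_rcons x c : mu2 (rcons x c) = mu2 x ++ mu2_letter c.
Proof. by rewrite -cats1 mu2_cat; congr (_ ++ _); exact: cats0. Qed.

Lemma size_mu2 x : size (mu2 x) = 4 * size x.
Proof. by elim: x => //= c x IH; rewrite IH mulnS. Qed.

Lemma mu2_compl x : mu2 (compl x) = compl (mu2 x).
Proof. by elim: x => // c x IH; rewrite -cat1s compl_cat !mu2_cat IH compl_cat; case: c. Qed.

Lemma mu2_TM k : mu2 (TM k) = TM k.+2.
Proof. by elim: k => // k IH; rewrite TM_S mu2_cat mu2_compl IH. Qed.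

Lemma nth_mu2 x q r : q < size x -> r < 4 ->
  nth la (mu2 x) (4 * q + r) = nth la (mu2_letter (nth la x q)) r.
Proof.
elim: x q => // c x IH [|q] lt_q lt_r.
  by rewrite (_ : mu2 _ = mu2_letter c ++ mu2 x) // nth_cat muln0 add0n lt_r.
rewrite (_ : mu2 _ = mu2_letter c ++ mu2 x) // nth_cat ifN; last by rewrite /=; lia.
by rewrite (_ : 4 * q.+1 + r - size _ = 4 * q + r) ?IH //=; lia.
Qed.

Lemma nth_mu2_4 x q : q < size x -> nth la (mu2 x) (4 * q) = nth la x q.
Proof. by move=> lt_q; rewrite -[4 * q]addn0 nth_mu2. Qed.

Lemma mu2_shift x q e : q + e <= size x ->
  (forall i, i < e -> nth la x (q + i) = nth la x i) ->
  forall i, i < 4 * e -> nth la (mu2 x) (4 * q + i) = nth la (mu2 x) i.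
Proof.
move=> le_qe eq_x i lt_i; rewrite (divn_eq i 4) [_ * 4]mulnC addnA -mulnDr.
by rewrite !nth_mu2 ?eq_x ?ltn_pmod //; lia.
Qed.

Definition tm_tail k : word := TM (2 * k) ++ compl (TM (2 * k).+2) ++ compl (TM (2 * k).+2).

Lemma tm_tailS k : tm_tail k.+1 = mu2 (tm_tail k).
Proof. by rewrite /tm_tail !mu2_cat mu2_compl !mu2_TM mulnS. Qed.

Lemma wn_tm_tail m : wn m.+4.+1 = lb :: dropl (tm_tail m.+1).
Proof.
have gt0 k : 0 < size (compl (TM k)) by rewrite size_compl size_TM expn_gt0.
rewrite wnE /tm_tail !dropl_cat ?size_cat ?addn_gt0 ?gt0 //.
by rewrite (_ : 2 * m.+1 = (2 * m).+2); last lia.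
Qed.

Definition tail_shape (v : word) := exists t, v = [:: la; lb; lb; la; lb; la] ++ rcons t lb.

Lemma mu2_tail_shape t : tail_shape (mu2 (la :: lb :: rcons t lb)).
Proof.
exists ([:: la; lb] ++ mu2 t ++ [:: lb; la; la]).
by rewrite -[_ :: _]/([:: la; lb] ++ rcons t lb) mu2_cat mu2_rcons !rcons_cat.
Qed.

Lemma tail_shape_mu2 v : tail_shape v -> tail_shape (mu2 v).
Proof. by case=> t ->; exact: (mu2_tail_shape [:: lb, la, lb, la & t]). Qed.

Lemma tm_tail_shape k : tail_shape (tm_tail k.+1).
Proof.
elim: k => [|k IH]; rewrite tm_tailS; last exact: tail_shape_mu2.
exact: (mu2_tail_shape [:: la; la; lb; lb; la; la]).
Qed.

Lemma tail_shapeP v : tail_shape v ->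
  [/\ 6 < size v, forall i, i < 6 -> nth la v i = nth la [:: la; lb; lb; la; lb; la] i
    & nth la v (size v).-1 = lb].
Proof.
case=> t ->; split=> [|i lt_i|]; first by rewrite size_cat size_rcons.
- by rewrite nth_cat lt_i.
- by rewrite nth_last last_cat last_rcons.
Qed.

Definition dominated_below (v : word) p :=
  exists2 e, e.+1 < p /\ p + e < (size v).-1 & dominated_at v p e.

(* Position 3 is excluded: in a word starting with abbaba the factor at 3 leaves the prefix
   only at e = 2, too late for [e.+1 < 3]; [Nyldon_cons_dropl] treats it separately. *)
Definition ba_dominated (v : word) := forall p, p.+1 != 3 -> p.+1 < size v ->
  nth la v p = lb -> nth la v p.+1 = la -> dominated_below v p.+1.

Lemma mu2_dominated_at x q e : q + e < size x -> dominated_at x q e ->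
  dominated_at (mu2 x) (4 * q) (4 * e).
Proof.
move=> lt_qe [eq_x xa xb]; split; first by apply: mu2_shift => //; exact: ltnW.
- by rewrite -mulnDr nth_mu2_4.
- by rewrite nth_mu2_4 //; lia.
Qed.

Section Mu2Dominated.

Variable x : word.
Hypothesis x_shape : tail_shape x.
Hypothesis x_dom : ba_dominated x.

Lemma mu2_dominated_below_4q q : q.+1 < size x ->
  nth la x q = lb -> nth la x q.+1 = la -> dominated_below (mu2 x) (4 * q.+1).
Proof.
have [sz pre _] := tail_shapeP x_shape; move=> lt_q xb xa.
have [e [lt_e lt_qe] dom_e] : exists2 e, e < q.+1 /\ q.+1 + e < size x & dominated_at x q.+1 e.
  have [q2|q2] := eqVneq q 2.
    (* position 3 of [x] is not covered by [x_dom], but its shape gives the witness 2 *)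
    exists 2; first by rewrite q2; lia.
    by subst q; split=> [[|[|i]] // _||]; rewrite !pre.
  have [e [lt_e lt_qe] dom_e] := x_dom q2 lt_q xb xa.
  by exists e; first lia.
exists (4 * e); first by rewrite size_mu2; lia.
exact: mu2_dominated_at.
Qed.

Lemma mu2_dominated_below_4q1 q : q < size x ->
  nth la x q = lb -> dominated_below (mu2 x) (4 * q + 1).
Proof.
have [_ pre _] := tail_shapeP x_shape.
have [_ prev _] := tail_shapeP (tail_shape_mu2 x_shape).
move=> lt_q xb; have q_gt0 : 0 < q by case: q xb {lt_q} => //; rewrite pre.
exists 1; first by rewrite size_mu2; lia.
split=> [[|//] _||].
- by rewrite addn0 nth_mu2 //= xb prev.
- by rewrite -addnA nth_mu2 //= xb.
- by rewrite prev.
Qed.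

Lemma mu2_dominated_below_4q3 q : 0 < q -> q < size x ->
  nth la x q = la -> dominated_below (mu2 x) (4 * q + 3).
Proof.
have [_ pre last_x] := tail_shapeP x_shape.
have [_ prev _] := tail_shapeP (tail_shape_mu2 x_shape).
move=> q_gt0 lt_q xa; have lt_q1 : q.+1 < size x.
  by rewrite ltn_neqAle lt_q andbT; apply/eqP => sz; move: last_x; rewrite -sz /= xa.
have v3 : nth la (mu2 x) (4 * q + 3) = la by rewrite nth_mu2.
have v4 : nth la (mu2 x) (4 * q + 3 + 1) = nth la x q.+1.
  by rewrite (_ : 4 * q + 3 + 1 = 4 * q.+1 + 0) ?nth_mu2 //; lia.
have v5 : nth la (mu2 x) (4 * q + 3 + 2) = ~~ nth la x q.+1.
  by rewrite (_ : 4 * q + 3 + 2 = 4 * q.+1 + 1) ?nth_mu2 //; lia.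
case xq1 : (nth la x q.+1) in v4 v5 *; [exists 2|exists 1]; rewrite ?size_mu2; try lia.
- split; last by rewrite prev.
  + by case=> [|[|//]] _; rewrite ?addn0 ?v3 ?v4 prev.
  + by rewrite v5.
- split; last by rewrite prev.
  + by case=> [|//] _; rewrite addn0 v3 prev.
  + by rewrite v4.
Qed.

Lemma ba_dominated_mu2 : ba_dominated (mu2 x).
Proof.
move=> p p3 lt_p vb va; rewrite size_mu2 in lt_p.
have [q [r [Ep lt_r]]] : exists q r, p.+1 = 4 * q + r /\ r < 4.
  by exists (p.+1 %/ 4), (p.+1 %% 4); rewrite {1}(divn_eq p.+1 4) mulnC ltn_mod.
have lt_q : q < size x by lia.
rewrite Ep nth_mu2 // in va; rewrite Ep.
case: r lt_r Ep va => [|[|[|[|//]]]] _ Ep /= va.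
- case: q Ep lt_q va => [|q] Ep lt_q va; first by rewrite muln0 in Ep.
  have xb : nth la x q = lb by rewrite -vb (_ : p = 4 * q + 3) ?nth_mu2 //; lia.
  by rewrite addn0; apply: mu2_dominated_below_4q.
- have xb : nth la x q = lb by rewrite -vb (_ : p = 4 * q + 0) ?nth_mu2 //; lia.
  exact: mu2_dominated_below_4q1.
- have : ~~ nth la x q = lb by rewrite -vb (_ : p = 4 * q + 1) ?nth_mu2 //; lia.
  by rewrite va.
- by apply: mu2_dominated_below_4q3 => //; move: p3; rewrite Ep; lia.
Qed.

End Mu2Dominated.

Definition ba_dominatedb (v : word) : bool :=
  all (fun p => (p.+1 != 3) ==> (nth la v p == lb) ==> (nth la v p.+1 == la) ==>
    has (fun e => [&& p.+1 + e < (size v).-1,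
                      all (fun i => nth la v (p.+1 + i) == nth la v i) (iota 0 e),
                      nth la v (p.+1 + e) == la & nth la v e == lb]) (iota 0 p))
    (iota 0 (size v).-1).

Lemma ba_dominatedP v : ba_dominatedb v -> ba_dominated v.
Proof.
move=> /allP dom_v p p3 lt_p vb va.
have p_in : p \in iota 0 (size v).-1 by rewrite mem_iota; lia.
move: (dom_v p p_in); rewrite p3 vb va /= => /hasP [e].
rewrite mem_iota => lt_e /and4P [lt_pe /allP eq_v /eqP va' /eqP vb'].
exists e; first lia.
by split=> // i lt_i; apply/eqP/eq_v; rewrite mem_iota.
Qed.

Lemma ba_dominated_tm_tail k : ba_dominated (tm_tail k.+1).
Proof.
elim: k => [|k IH]; first by apply: ba_dominatedP; vm_compute.
by rewrite tm_tailS; apply: ba_dominated_mu2 => //; exact: tm_tail_shape.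
Qed.

(** * The words w_n are Nyldon *)

Section ConsDropl.

Variable v : word.
Hypothesis v_shape : tail_shape v.
Hypothesis v_dom : ba_dominated v.

Let w := lb :: dropl v.

Lemma size_cons_dropl : size w = size v.
Proof.
have [sz _ _] := tail_shapeP v_shape.
by rewrite /= size_takel ?leq_pred // prednK //; lia.
Qed.

Lemma nth_cons_dropl i : i < (size v).-1 -> nth la w i.+1 = nth la v i.
Proof. by move=> lt_i; rewrite /= nth_take. Qed.

Lemma cons_dropl_dominated c : 3 < c -> c.+1 < size w ->
  nth la w c = lb -> nth la w c.+1 = la -> exists2 d, d < c & dominated_at w c d.
Proof.
rewrite size_cons_dropl; case: c => // p lt3p lt_p wb wa.
have [sz _ _] := tail_shapeP v_shape.
rewrite !nth_cons_dropl in wb wa; try lia.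
have p3 : p.+1 != 3 by rewrite eqSS; apply/eqP; lia.
have [e [lt_e lt_pe] [eq_v va vb]] := v_dom p3 (ltnW lt_p) wb wa.
exists e.+1 => //; split.
- case=> [|i] lt_i; first by rewrite addn0 nth_cons_dropl ?wb //; lia.
  by rewrite addnS !nth_cons_dropl ?eq_v //; lia.
- by rewrite addnS nth_cons_dropl.
- by rewrite nth_cons_dropl //; lia.
Qed.

Lemma Nyldon_cons_dropl : Nyldon w.
Proof.
have [sz pre _] := tail_shapeP v_shape; have szw := size_cons_dropl.
have w_pre i : i < 7 -> nth la w i = nth la [:: lb; la; lb; lb; la; lb; la] i.
  by case: i => [//|i] lt_i; rewrite nth_cons_dropl ?pre //; lia.
apply: Nyldon_of_factors => [|c l c_gt0 l_gt0 le_clw le_cl]; first lia.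
have mismatch d : d < c -> (forall i, i < d -> i < l -> nth la w (c + i) = nth la w i) ->
    (d < l -> nth la w (c + d) = la /\ nth la w d = lb) -> False.
  by move=> lt_dc eq_w mis; exact: negP (not_lexle_prefix_factor lt_dc le_clw eq_w mis) le_cl.
case wc : (nth la w c); last by exfalso; apply: (mismatch 0) => // _; rewrite addn0 wc.
have c2 : 1 < c by case: c c_gt0 wc {le_clw le_cl mismatch} => [|[|]] //; rewrite w_pre.
have [l1|l2] := eqVneq l 1.
  by exfalso; apply: (mismatch 1) => // [[|//] _ _|]; rewrite ?addn0 ?wc ?l1.
case wc1 : (nth la w c.+1).
  left; case: l l_gt0 l2 le_clw {le_cl mismatch} => [|[|l]] // _ _ le_clw.
  by rewrite !factorS ?wc ?wc1; try lia; exact: not_Nyldon_bb.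
have [c3|c3] := eqVneq c 3.
  (* w = babbaba...: the factor at 3 is a prefix of bab, or bab followed by a, or baba... *)
  subst c; case: l l_gt0 l2 le_clw le_cl mismatch => [|[|[|[|l]]]] // _ _ le_clw le_cl mismatch.
  - by exfalso; apply: (mismatch 2) => // [[|[|//]] _ _]; rewrite !w_pre.
  - by right; split; rewrite ?w_pre //; lia.
  - by left; rewrite !factorS ?w_pre; try lia; exact: not_Nyldon_baba.
have c4 : 3 < c.
  case: (leqP c 3) => // le_c3; have c_2 : c = 2 by lia.
  by move: wc1; rewrite c_2 w_pre.
have lt_c1 : c.+1 < size w by lia.
have [d lt_dc dom_d] := cons_dropl_dominated c4 lt_c1 wc wc1.
by rewrite (negbTE (not_lexle_dominated lt_dc le_clw dom_d)) in le_cl.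
Qed.

End ConsDropl.

Lemma Nyldon_wn n : 1 <= n -> Nyldon (wn n).
Proof.
case: n => [|[|[|[|[|m]]]]] // _; [exact: Nyldon1|exact: Nyldon1|exact: Nyldon_ba| |].
- by apply: Nyldon_of_factors_bb; vm_compute.
- rewrite wn_tm_tail; apply: Nyldon_cons_dropl; [exact: tm_tail_shape|exact: ba_dominated_tm_tail].
Qed.

Theorem theorem6 :
  [/\ (forall n i, i < size (Wprefix n) -> nth la (Wprefix n) i = TMinf i),
      (forall i, exists n, i < size (Wprefix n)),
      (forall n, 1 <= n -> lexle (wn n) (wn n.+1)) &
      (forall n, 1 <= n -> Nyldon (wn n))].
Proof.
split; [exact: nth_Wprefix|exact: size_Wprefix_unbounded|exact: wn_le_succ|exact: Nyldon_wn].
Qed.
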